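(* Let $G$ be a directed po-group satisfying RDP (respectively RDP$_1$). Then the pseudo effect algebra $\Gamma(\mathbb Z \overrightarrow{\times} G,(1,0))$ satisfies RDP (respectively RDP$_1$).
   Context: A po-group is a (not necessarily Abelian, additively written) group with a partial order $\le$ such that $a\le b$ implies $x+a+y\le x+b+y$; $G^+$ is its positive cone; $G$ is directed if any two elements have a common upper bound. $\mathbb Z \overrightarrow{\times} G$ is the group $\mathbb Z\times G$ (componentwise operation) with the lexicographic order: $(m,g)\le(n,h)$ iff $m<n$, or $m=n$ and $g\le h$. For a po-group $H$ and $u\in H^+$ a strong unit (for each $h\in H$ there is $k\ge1$ with $h\le ku$), $\Gamma(H,u)=\{h\in H:0\le h\le u\}$ is a pseudo effect algebra with constants $0,u$ and partial addition: $a+b$ is defined (and equals the group sum) iff $a+b\le u$. $(1,0)$ is a strong unit of $\mathbb Z \overrightarrow{\times} G$. RDP for a po-group $G$: for all $a_1,a_2,b_1,b_2\in G^+$ with $a_1+a_2=b_1+b_2$ there are $c_{11},c_{12},c_{21},c_{22}\in G^+$ with $a_1=c_{11}+c_{12}$, $a_2=c_{21}+c_{22}$, $b_1=c_{11}+c_{21}$, $b_2=c_{12}+c_{22}$; RDP$_1$ additionally requires that $0\le x\le c_{12}$, $0\le y\le c_{21}$ imply $x+y=y+x$. RDP and RDP$_1$ for a pseudo effect algebra $E$ are defined identically, with $G^+$ replaced by $E$ and all sums required to be defined in $E$. *)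

From Stdlib Require Import ZArith Lia.
Open Scope Z_scope.

Record poGroup := PoGroup {
  car :> Type;
  gadd : car -> car -> car;
  gzero : car;
  gopp : car -> car;
  gle : car -> car -> Prop;
  gaddA : forall x y z, gadd x (gadd y z) = gadd (gadd x y) z;
  gadd0l : forall x, gadd gzero x = x;
  gadd0r : forall x, gadd x gzero = x;
  gaddNl : forall x, gadd (gopp x) x = gzero;
  gaddNr : forall x, gadd x (gopp x) = gzero;
  gle_refl : forall x, gle x x;
  gle_anti : forall x y, gle x y -> gle y x -> x = y;
  gle_trans : forall x y z, gle x y -> gle y z -> gle x z;
  gle_compat : forall a b x y, gle a b -> gle (gadd (gadd x a) y) (gadd (gadd x b) y)
}.

Arguments gadd {p}. Arguments gzero {p}. Arguments gopp {p}. Arguments gle {p}.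

Definition pos {G : poGroup} (a : G) : Prop := gle gzero a.

Definition directed (G : poGroup) : Prop :=
  forall a b : G, exists c : G, gle a c /\ gle b c.

Definition RDP_po (G : poGroup) : Prop :=
  forall a1 a2 b1 b2 : G, pos a1 -> pos a2 -> pos b1 -> pos b2 ->
    gadd a1 a2 = gadd b1 b2 ->
    exists c11 c12 c21 c22 : G,
      pos c11 /\ pos c12 /\ pos c21 /\ pos c22 /\
      a1 = gadd c11 c12 /\ a2 = gadd c21 c22 /\
      b1 = gadd c11 c21 /\ b2 = gadd c12 c22.

Definition RDP1_po (G : poGroup) : Prop :=
  forall a1 a2 b1 b2 : G, pos a1 -> pos a2 -> pos b1 -> pos b2 ->
    gadd a1 a2 = gadd b1 b2 ->
    exists c11 c12 c21 c22 : G,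
      pos c11 /\ pos c12 /\ pos c21 /\ pos c22 /\
      a1 = gadd c11 c12 /\ a2 = gadd c21 c22 /\
      b1 = gadd c11 c21 /\ b2 = gadd c12 c22 /\
      (forall x y : G, pos x -> gle x c12 -> pos y -> gle y c21 ->
         gadd x y = gadd y x).

Definition lex_le (G : poGroup) (p q : Z * G) : Prop :=
  fst p < fst q \/ (fst p = fst q /\ gle (snd p) (snd q)).

Definition lex_add (G : poGroup) (p q : Z * G) : Z * G :=
  (fst p + fst q, gadd (snd p) (snd q)).

Definition lexZ (G : poGroup) : poGroup.
Proof.
  refine (@PoGroup (Z * G) (lex_add G) (0, gzero) (fun p => (- fst p, gopp (snd p)))
            (lex_le G) _ _ _ _ _ _ _ _ _).
  - intros [a x] [b y] [c z]; unfold lex_add; simpl; f_equal; try lia; try apply gaddA.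
  - intros [a x]; unfold lex_add; simpl; f_equal; try lia; try apply gadd0l.
  - intros [a x]; unfold lex_add; simpl; f_equal; try lia; try apply gadd0r.
  - intros [a x]; unfold lex_add; simpl; f_equal; try lia; try apply gaddNl.
  - intros [a x]; unfold lex_add; simpl; f_equal; try lia; try apply gaddNr.
  - intros [a x]; right; simpl; split; [reflexivity | apply gle_refl].
  - intros [a x] [b y] [H|[H1 H2]] [K|[K1 K2]]; simpl in *; try lia.
    subst; f_equal; apply gle_anti; assumption.
  - intros [a x] [b y] [c z] [H|[H1 H2]] [K|[K1 K2]]; unfold lex_le; simpl in *.
    + left; lia.
    + left; lia.
    + left; lia.
    + right; split; [lia | eapply gle_trans; eassumption].
  - intros [a x] [b y] [c z] [d w] [H|[H1 H2]]; unfold lex_le, lex_add; simpl in *.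
    + left; lia.
    + right; split; [lia | apply gle_compat; assumption].
Defined.

(* A partial algebra, with the partial addition given as its graph:
   psum a b c  <->  a + b is defined and equals c. *)
Record pAlg := PAlg {
  pcar :> Type;
  psum : pcar -> pcar -> pcar -> Prop
}.
Arguments psum {p}.

Definition ple {E : pAlg} (a b : E) : Prop := exists c : E, psum a c b.

Definition RDP_pea (E : pAlg) : Prop :=
  forall a1 a2 b1 b2 : E,
    (exists s : E, psum a1 a2 s /\ psum b1 b2 s) ->
    exists c11 c12 c21 c22 : E,
      psum c11 c12 a1 /\ psum c21 c22 a2 /\
      psum c11 c21 b1 /\ psum c12 c22 b2.

(* RDP_1 for a pseudo effect algebra; "x + y = y + x" means both sums are
   defined and equal. *)
Definition RDP1_pea (E : pAlg) : Prop :=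
  forall a1 a2 b1 b2 : E,
    (exists s : E, psum a1 a2 s /\ psum b1 b2 s) ->
    exists c11 c12 c21 c22 : E,
      psum c11 c12 a1 /\ psum c21 c22 a2 /\
      psum c11 c21 b1 /\ psum c12 c22 b2 /\
      (forall x y : E, ple x c12 -> ple y c21 ->
         exists s : E, psum x y s /\ psum y x s).

(* Gamma(H,u) = {h : 0 <= h <= u}, with a + b defined iff a + b <= u
   (equivalently: the group sum lies in Gamma(H,u)). *)
Definition Gamma (H : poGroup) (u : H) : pAlg :=
  @PAlg {h : H | gle gzero h /\ gle h u}
        (fun a b c => gadd (proj1_sig a) (proj1_sig b) = proj1_sig c).

Definition strong_unit (H : poGroup) (u : H) : Prop :=
  pos u /\ forall h : H, exists k : nat, (k >= 1)%nat /\
    gle h (Nat.iter k (fun v => gadd v u) gzero).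

From Stdlib Require Import ZArith Lia.

(* An element of Gamma(Z ->x G, (1,0)) is either (0,g) with g >= 0 or (1,g)
   with g <= 0, and two elements can be added only if at most one of them lies
   in the upper layer.  A decomposition problem in Gamma is therefore either a
   problem in G^+ (both sums in the lower layer), or, when the common sum lies
   in the upper layer, it can be shifted into G^+ by an element t bounding the
   negative parts from above (directedness), solved there by RDP, and shifted
   back: the shift is absorbed by the corner c22 (resp. c11) lying in the upper
   layer.  The remaining "crossing" cases have the trivial refinement with a
   zero corner.  The corners c12, c21 always end up in the lower layer or zero,
   which transfers the commutation condition of RDP_1. *)

Section PoGroupFacts.

Variable G : poGroup.

Local Infix "+" := (@gadd G).
Local Notation "- x" := (@gopp G x).
Local Notation e := (@gzero G).
Local Infix "<=" := (@gle G).

Lemma gle_addl (a b c : G) : a <= b -> c + a <= c + b.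
Proof. intro le_ab; pose proof (gle_compat G a b c e le_ab) as H; now rewrite !gadd0r in H. Qed.

Lemma gle_addr (a b c : G) : a <= b -> a + c <= b + c.
Proof. intro le_ab; pose proof (gle_compat G a b e c le_ab) as H; now rewrite !gadd0l in H. Qed.

Lemma gle_addr_pos (u v : G) : pos v -> u <= u + v.
Proof. intro pv; pose proof (gle_addl _ _ u pv) as H; now rewrite gadd0r in H. Qed.

Lemma gle_addl_pos (u v : G) : pos v -> u <= v + u.
Proof. intro pv; pose proof (gle_addr _ _ u pv) as H; now rewrite gadd0l in H. Qed.

Lemma pos_add (a b : G) : pos a -> pos b -> pos (a + b).
Proof. intros pa pb; exact (gle_trans G _ _ _ pa (gle_addr_pos _ _ pb)). Qed.

Lemma directed_shiftr : directed G ->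
  forall x y : G, exists t, pos (x + t) /\ pos (y + t).
Proof.
intros dirG x y; destruct (dirG (- x) (- y)) as [t [le_xt le_yt]].
exists t; split; unfold pos.
- rewrite <- (gaddNr G x); now apply gle_addl.
- rewrite <- (gaddNr G y); now apply gle_addl.
Qed.

Lemma directed_shiftl : directed G ->
  forall x y : G, exists t, pos (t + x) /\ pos (t + y).
Proof.
intros dirG x y; destruct (dirG (- x) (- y)) as [t [le_xt le_yt]].
exists t; split; unfold pos.
- rewrite <- (gaddNl G x); now apply gle_addr.
- rewrite <- (gaddNl G y); now apply gle_addr.
Qed.

End PoGroupFacts.

(* RDP whose refinement additionally satisfies a condition [Q c12 c21] on its
   off-diagonal corners; RDP_1 is the instance [Q := commute_below]. *)
Definition RDP_po_with (G : poGroup) (Q : G -> G -> Prop) : Prop :=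
  forall a1 a2 b1 b2 : G, pos a1 -> pos a2 -> pos b1 -> pos b2 ->
    gadd a1 a2 = gadd b1 b2 ->
    exists c11 c12 c21 c22 : G,
      pos c11 /\ pos c12 /\ pos c21 /\ pos c22 /\
      a1 = gadd c11 c12 /\ a2 = gadd c21 c22 /\
      b1 = gadd c11 c21 /\ b2 = gadd c12 c22 /\ Q c12 c21.

Definition commute_below (G : poGroup) (c12 c21 : G) : Prop :=
  forall x y : G, pos x -> gle x c12 -> pos y -> gle y c21 -> gadd x y = gadd y x.

Lemma RDP_po_with_True (G : poGroup) : RDP_po G -> RDP_po_with G (fun _ _ => True).
Proof.
intros rdpG a1 a2 b1 b2 pa1 pa2 pb1 pb2 e.
destruct (rdpG a1 a2 b1 b2 pa1 pa2 pb1 pb2 e) as (c11 & c12 & c21 & c22 & ?).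
exists c11, c12, c21, c22; intuition.
Qed.

Lemma RDP1_po_with (G : poGroup) : RDP1_po G -> RDP_po_with G (commute_below G).
Proof. exact (fun H => H). Qed.

Definition RDP_pea_with (E : pAlg) (Q : E -> E -> Prop) : Prop :=
  forall a1 a2 b1 b2 : E,
    (exists s : E, psum a1 a2 s /\ psum b1 b2 s) ->
    exists c11 c12 c21 c22 : E,
      psum c11 c12 a1 /\ psum c21 c22 a2 /\
      psum c11 c21 b1 /\ psum c12 c22 b2 /\ Q c12 c21.

Lemma RDP_pea_with_weaken (E : pAlg) (Q Q' : E -> E -> Prop) :
  (forall c12 c21, Q c12 c21 -> Q' c12 c21) ->
  RDP_pea_with E Q -> RDP_pea_with E Q'.
Proof.
intros QQ' rdpE a1 a2 b1 b2 s.
destruct (rdpE a1 a2 b1 b2 s) as (c11 & c12 & c21 & c22 & ? & ? & ? & ? & ?).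
exists c11, c12, c21, c22; repeat split; auto.
Qed.

Lemma RDP_pea_of_with (E : pAlg) (Q : E -> E -> Prop) :
  RDP_pea_with E Q -> RDP_pea E.
Proof.
intros rdpE a1 a2 b1 b2 s.
destruct (rdpE a1 a2 b1 b2 s) as (c11 & c12 & c21 & c22 & ? & ? & ? & ? & _).
now exists c11, c12, c21, c22.
Qed.

Section GammaLex.

Variable G : poGroup.

Local Infix "+" := (@gadd G).
Local Notation "- x" := (@gopp G x).
Local Notation e := (@gzero G).
Local Infix "<=" := (@gle G).
Local Notation E := (Gamma (lexZ G) (1%Z, gzero)).

Lemma Gamma_cases (n : Z) (g : G) :
  gle (gzero : lexZ G) (n, g) -> gle ((n, g) : lexZ G) (1%Z, gzero) ->
  (n = 0%Z /\ pos g) \/ (n = 1%Z /\ g <= e).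
Proof.
cbn; unfold lex_le; cbn.
intros [? | [? ?]] [? | [? ?]]; try lia; auto.
Qed.

Definition low (g : G) (pg : pos g) : E.
Proof. refine (exist _ (0%Z, g) _); cbn; unfold lex_le; cbn; split; auto with zarith. Defined.

Definition high (g : G) (leg0 : g <= e) : E.
Proof. refine (exist _ (1%Z, g) _); cbn; unfold lex_le; cbn; split; auto with zarith. Defined.

Definition zero : E := low e (gle_refl G e).

Lemma ple_low (x c : E) (g : G) : ple x c -> proj1_sig c = (0%Z, g) ->
  exists h, proj1_sig x = (0%Z, h) /\ pos h /\ h <= g.
Proof.
destruct x as [[n h] [xlo xhi]], c as [cg ?].
intros [[[k d] [dlo dhi]] exdc] ecg; cbn in exdc, ecg |- *; subst cg.
unfold lex_add in ecg; cbn in ecg; injection ecg as enk ehd.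
destruct (Gamma_cases _ _ xlo xhi) as [[-> ph] | [-> _]];
destruct (Gamma_cases _ _ dlo dhi) as [[-> pd] | [-> _]]; try lia.
exists h; repeat split; auto.
rewrite <- ehd; now apply gle_addr_pos.
Qed.

Lemma ple_zero (x : E) : ple x zero -> proj1_sig x = (0%Z, e).
Proof.
intros lex; destruct (ple_low x zero e lex eq_refl) as (h & exh & ph & leh).
rewrite exh; f_equal; now apply gle_anti.
Qed.

Section Refinement.

Hypothesis dirG : directed G.
Variable Q : G -> G -> Prop.
Hypothesis rdpG : RDP_po_with G Q.

Definition refinement (c11 c12 c21 c22 : E) (a1 a2 b1 b2 : lexZ G) : Prop :=
  gadd (proj1_sig c11) (proj1_sig c12) = a1 /\ gadd (proj1_sig c21) (proj1_sig c22) = a2 /\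
  gadd (proj1_sig c11) (proj1_sig c21) = b1 /\ gadd (proj1_sig c12) (proj1_sig c22) = b2.

Lemma refinement_transpose (c11 c12 c21 c22 : E) (a1 a2 b1 b2 : lexZ G) :
  refinement c11 c12 c21 c22 a1 a2 b1 b2 -> refinement c11 c21 c12 c22 b1 b2 a1 a2.
Proof. unfold refinement; tauto. Qed.

Definition corner (c12 c21 : E) : Prop :=
  (exists g h, proj1_sig c12 = (0%Z, g) /\ proj1_sig c21 = (0%Z, h) /\ Q g h) \/
  c12 = zero \/ c21 = zero.

Definition refinable (a1 a2 b1 b2 : lexZ G) : Prop :=
  exists c11 c12 c21 c22 : E, refinement c11 c12 c21 c22 a1 a2 b1 b2 /\ corner c12 c21.

Lemma refinable_low_low (x1 x2 y1 y2 : G) :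
  pos x1 -> pos x2 -> pos y1 -> pos y2 -> x1 + x2 = y1 + y2 ->
  refinable (0%Z, x1) (0%Z, x2) (0%Z, y1) (0%Z, y2).
Proof.
intros px1 px2 py1 py2 exy.
destruct (rdpG x1 x2 y1 y2 px1 px2 py1 py2 exy)
  as (c11 & c12 & c21 & c22 & p11 & p12 & p21 & p22 & e1 & e2 & e3 & e4 & q).
exists (low c11 p11), (low c12 p12), (low c21 p21), (low c22 p22).
split; [repeat split; cbn; unfold lex_add; cbn; f_equal; auto |].
left; exists c12, c21; auto.
Qed.

Lemma refinable_low_high (x1 x2 y1 y2 : G) :
  pos x1 -> x2 <= e -> pos y1 -> x1 + x2 = y1 + y2 ->
  refinable (0%Z, x1) (1%Z, x2) (0%Z, y1) (1%Z, y2).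
Proof.
intros px1 lex2 py1 exy.
destruct (directed_shiftr G dirG x2 y2) as (t & pxt & pyt).
assert (exyt : x1 + (x2 + t) = y1 + (y2 + t)) by now rewrite !gaddA, exy.
destruct (rdpG _ _ _ _ px1 pxt py1 pyt exyt)
  as (c11 & c12 & c21 & c22 & p11 & p12 & p21 & p22 & e1 & e2 & e3 & e4 & q).
assert (ex2 : c21 + (c22 + - t) = x2)
  by now rewrite gaddA, <- e2, <- gaddA, gaddNr, gadd0r.
assert (ey2 : c12 + (c22 + - t) = y2)
  by now rewrite gaddA, <- e4, <- gaddA, gaddNr, gadd0r.
assert (le22 : c22 + - t <= e).
{ apply (gle_trans G _ x2); [rewrite <- ex2; now apply gle_addl_pos | exact lex2]. }
exists (low c11 p11), (low c12 p12), (low c21 p21), (high _ le22).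
split; [repeat split; cbn; unfold lex_add; cbn; f_equal; auto |].
left; exists c12, c21; auto.
Qed.

Lemma refinable_high_low (x1 x2 y1 y2 : G) :
  x1 <= e -> pos x2 -> pos y2 -> x1 + x2 = y1 + y2 ->
  refinable (1%Z, x1) (0%Z, x2) (1%Z, y1) (0%Z, y2).
Proof.
intros lex1 px2 py2 exy.
destruct (directed_shiftl G dirG x1 y1) as (t & pxt & pyt).
assert (exyt : t + x1 + x2 = t + y1 + y2) by now rewrite <- !gaddA, exy.
destruct (rdpG _ _ _ _ pxt px2 pyt py2 exyt)
  as (c11 & c12 & c21 & c22 & p11 & p12 & p21 & p22 & e1 & e2 & e3 & e4 & q).
assert (ex1 : - t + c11 + c12 = x1)
  by now rewrite <- gaddA, <- e1, gaddA, gaddNl, gadd0l.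
assert (ey1 : - t + c11 + c21 = y1)
  by now rewrite <- gaddA, <- e3, gaddA, gaddNl, gadd0l.
assert (le11 : - t + c11 <= e).
{ apply (gle_trans G _ x1); [rewrite <- ex1; now apply gle_addr_pos | exact lex1]. }
exists (high _ le11), (low c12 p12), (low c21 p21), (low c22 p22).
split; [repeat split; cbn; unfold lex_add; cbn; f_equal; auto |].
left; exists c12, c21; auto.
Qed.

Lemma refinement_cross (x1 x2 y1 y2 : G) :
  pos x1 -> y1 <= e -> pos y2 -> x1 + x2 = y1 + y2 ->
  exists c11 c21 c22 : E, refinement c11 zero c21 c22 (0%Z, x1) (1%Z, x2) (1%Z, y1) (0%Z, y2).
Proof.
intros px1 ley1 py2 exy.
assert (le21 : - x1 + y1 <= e).
{ rewrite <- (gaddNl G x1); apply gle_addl; exact (gle_trans G _ _ _ ley1 px1). }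
exists (low x1 px1), (high _ le21), (low y2 py2).
repeat split; cbn; unfold lex_add; cbn; f_equal.
- apply gadd0r.
- now rewrite <- gaddA, <- exy, gaddA, gaddNl, gadd0l.
- now rewrite gaddA, gaddNr, gadd0l.
- apply gadd0l.
Qed.

Lemma refinable_cross (x1 x2 y1 y2 : G) :
  pos x1 -> y1 <= e -> pos y2 -> x1 + x2 = y1 + y2 ->
  refinable (0%Z, x1) (1%Z, x2) (1%Z, y1) (0%Z, y2).
Proof.
intros px1 ley1 py2 exy.
destruct (refinement_cross x1 x2 y1 y2 px1 ley1 py2 exy) as (c11 & c21 & c22 & r).
exists c11, zero, c21, c22; split; [exact r | right; now left].
Qed.

Lemma refinable_cross_transposed (x1 x2 y1 y2 : G) :
  x1 <= e -> pos x2 -> pos y1 -> x1 + x2 = y1 + y2 ->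
  refinable (1%Z, x1) (0%Z, x2) (0%Z, y1) (1%Z, y2).
Proof.
intros lex1 px2 py1 exy.
destruct (refinement_cross y1 y2 x1 x2 py1 lex1 px2 (eq_sym exy)) as (c11 & c21 & c22 & r).
exists c11, c21, zero, c22; split; [now apply refinement_transpose | right; now right].
Qed.

Lemma Gamma_RDP_with : RDP_pea_with E corner.
Proof.
intros [[m1 x1] [a1lo a1hi]] [[m2 x2] [a2lo a2hi]] [[n1 y1] [b1lo b1hi]]
  [[n2 y2] [b2lo b2hi]] [[[k s] [slo shi]] [ea eb]].
cbn in ea, eb; unfold lex_add in ea, eb; cbn in ea, eb.
injection ea as em ex; injection eb as en ey.
assert (exy : x1 + x2 = y1 + y2) by congruence.
enough (r : refinable (m1, x1) (m2, x2) (n1, y1) (n2, y2)).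
{ destruct r as (c11 & c12 & c21 & c22 & (? & ? & ? & ?) & ?).
  now exists c11, c12, c21, c22. }
destruct (Gamma_cases _ _ slo shi) as [[-> _] | [-> _]];
destruct (Gamma_cases _ _ a1lo a1hi) as [[-> p1] | [-> p1]];
destruct (Gamma_cases _ _ a2lo a2hi) as [[-> p2] | [-> p2]];
destruct (Gamma_cases _ _ b1lo b1hi) as [[-> q1] | [-> q1]];
destruct (Gamma_cases _ _ b2lo b2hi) as [[-> q2] | [-> q2]];
try lia.
- exact (refinable_low_low x1 x2 y1 y2 p1 p2 q1 q2 exy).
- exact (refinable_low_high x1 x2 y1 y2 p1 p2 q1 exy).
- exact (refinable_cross x1 x2 y1 y2 p1 q1 q2 exy).
- exact (refinable_cross_transposed x1 x2 y1 y2 p1 p2 q1 exy).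
- exact (refinable_high_low x1 x2 y1 y2 p1 p2 q2 exy).
Qed.

End Refinement.

Lemma corner_commute (c12 c21 : E) : corner (commute_below G) c12 c21 ->
  forall x y : E, ple x c12 -> ple y c21 -> exists s : E, psum x y s /\ psum y x s.
Proof.
intros [(g & h & e12 & e21 & q) | [-> | ->]] [[nx gx] px] [[ny gy] py] lex ley.
- destruct (ple_low _ _ g lex e12) as (hx & exh & phx & lehx).
  destruct (ple_low _ _ h ley e21) as (hy & eyh & phy & lehy).
  cbn in exh, eyh; injection exh as -> ->; injection eyh as -> ->.
  exists (low (hx + hy) (pos_add G _ _ phx phy)).
  cbn; unfold lex_add; cbn; split; f_equal; auto.
  symmetry; auto.
- apply ple_zero in lex; cbn in lex; injection lex as -> ->.
  exists (exist _ (ny, gy) py); cbn; unfold lex_add; cbn.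
  now rewrite gadd0l, gadd0r, Z.add_0_r.
- apply ple_zero in ley; cbn in ley; injection ley as -> ->.
  exists (exist _ (nx, gx) px); cbn; unfold lex_add; cbn.
  now rewrite gadd0l, gadd0r, Z.add_0_r.
Qed.

End GammaLex.

Theorem proposition3p3 (G : poGroup) :
  directed G ->
  (RDP_po G -> RDP_pea (Gamma (lexZ G) (1%Z, gzero))) /\
  (RDP1_po G -> RDP1_pea (Gamma (lexZ G) (1%Z, gzero))).
Proof.
intros dirG; split; intros rdpG.
- exact (RDP_pea_of_with _ _ (Gamma_RDP_with G dirG _ (RDP_po_with_True G rdpG))).
- exact (RDP_pea_with_weaken _ _ _ (corner_commute G)
           (Gamma_RDP_with G dirG _ (RDP1_po_with G rdpG))).
Qed.
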